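(* Let $\mathcal X\subset\mathbb R^d$ be finite, let $d$ denote Euclidean distance, and let $C=\{C_1,\dots,C_k\}$ be a center-based clustering of $\mathcal X$ whose centers $\mu_1,\dots,\mu_k$ are the centers of mass of the clusters, $\mu_i=\frac1{|C_i|}\sum_{x\in C_i}x$. Assume $C$ satisfies the $\gamma$-margin property. Fix $i\in[k]$ and $\epsilon\ge 0$, and let $\mu_i'\in\mathbb R^d$ be any point with $d(\mu_i,\mu_i')\le r(C_i)\,\epsilon$, where $r(C_i)=\max_{x\in C_i}d(x,\mu_i)$. If $\gamma\ge 1+2\epsilon$, then for all $x\in C_i$ and all $y\in\mathcal X\setminus C_i$ we have $d(x,\mu_i')<d(y,\mu_i')$.
   Context: A clustering $C=\{C_1,\dots,C_k\}$ of $\mathcal X$ is center-based with centers $\mu_1,\dots,\mu_k$ if for every $x\in\mathcal X$ and $i\le k$: $x\in C_i \iff i=\arg\min_j d(x,\mu_j)$. Such a clustering satisfies the $\gamma$-margin property if for all $i\in[k]$, every $x\in C_i$ and every $y\in\mathcal X\setminus C_i$: $\gamma\, d(x,\mu_i)<d(y,\mu_i)$. *)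

From HB Require Import structures.
From mathcomp Require Import all_boot all_order all_algebra.
From mathcomp Require Import reals.
Set Implicit Arguments. Unset Strict Implicit. Unset Printing Implicit Defensive.
Import Order.TTheory GRing.Theory Num.Theory.
Local Open Scope ring_scope.

Section Defs.
Variables (R : realType) (d : nat).
Notation pt := 'rV[R]_d.

Definition edist (x y : pt) : R := Num.sqrt (\sum_(j < d) (x 0 j - y 0 j) ^+ 2).

(* center of mass of a finite cluster given as a duplicate-free sequence *)
Definition center_of_mass (S : seq pt) : pt := (size S)%:R^-1 *: \sum_(x <- S) x.

Definition cradius (S : seq pt) (mu : pt) : R := \big[Num.max/0]_(x <- S) edist x mu.

Definition is_clustering (k : nat) (X : seq pt) (C : 'I_k -> seq pt) : Prop :=
  [/\ forall i, uniq (C i),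
      forall i, (0 < size (C i))%N,
      forall i x, x \in C i -> x \in X,
      forall x, x \in X -> exists i, x \in C i
    & forall i j x, x \in C i -> x \in C j -> i = j].

Definition center_based (k : nat) (X : seq pt) (C : 'I_k -> seq pt) (mu : 'I_k -> pt) : Prop :=
  forall x, x \in X -> forall i,
    x \in C i <-> (forall j, j != i -> edist x (mu i) < edist x (mu j)).

Definition gamma_margin (k : nat) (X : seq pt) (C : 'I_k -> seq pt) (mu : 'I_k -> pt)
  (gamma : R) : Prop :=
  forall i x y, x \in C i -> y \in X -> y \notin C i ->
    gamma * edist x (mu i) < edist y (mu i).
End Defs.

From HB Require Import structures.
From mathcomp Require Import all_boot all_order all_algebra.
From mathcomp Require Import reals.
From mathcomp Require Import ring lra.
Import Order.TTheory GRing.Theory Num.Theory.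
Local Open Scope ring_scope.

(* The margin gives gamma r(C_i) < d(y, mu_i), and moving the center by
   at most eps r(C_i) changes each distance by at most eps r(C_i), whence
   d(x, mu_i') <= (1 + eps) r(C_i) <= (gamma - eps) r(C_i) < d(y, mu_i'). *)

Section SquareSums.
Context {R : rcfType} {I : finType}.
Implicit Types a b : I -> R.

Lemma sumr_sqr_ge0 a : 0 <= \sum_i a i ^+ 2.
Proof. by apply: sumr_ge0 => i _; exact: sqr_ge0. Qed.

Lemma sumr_mul_sqr_le a b :
  (\sum_i a i * b i) ^+ 2 <= (\sum_i a i ^+ 2) * (\sum_i b i ^+ 2).
Proof.
have lagrange : \sum_i \sum_j (a i * b j - a j * b i) ^+ 2 =
    2 * ((\sum_i a i ^+ 2) * (\sum_i b i ^+ 2) - (\sum_i a i * b i) ^+ 2).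
  transitivity (\sum_i \sum_j (a i ^+ 2 * b j ^+ 2 + b i ^+ 2 * a j ^+ 2
                               - 2 * (a i * b i) * (a j * b j))).
    by apply: eq_bigr => i _; apply: eq_bigr => j _; ring.
  under eq_bigr do rewrite sumrB big_split /=.
  rewrite sumrB big_split /= -!big_distrlr /= -mulr_sumr mulrC; ring.
have : 0 <= \sum_i \sum_j (a i * b j - a j * b i) ^+ 2.
  by do 2![apply: sumr_ge0 => ? _]; exact: sqr_ge0.
by rewrite lagrange pmulr_rge0 ?subr_ge0.
Qed.

Lemma sqrt_sumr_sqrD a b :
  Num.sqrt (\sum_i (a i + b i) ^+ 2) <=
  Num.sqrt (\sum_i a i ^+ 2) + Num.sqrt (\sum_i b i ^+ 2).
Proof.
have cauchy_schwarz : \sum_i a i * b i <=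
    Num.sqrt (\sum_i a i ^+ 2) * Num.sqrt (\sum_i b i ^+ 2).
  rewrite -sqrtrM ?sumr_sqr_ge0 //; apply: le_trans (ler_norm _) _.
  by rewrite -sqrtr_sqr ler_wsqrtr // sumr_mul_sqr_le.
have expand : \sum_i (a i + b i) ^+ 2 =
    \sum_i a i ^+ 2 + 2 * \sum_i a i * b i + \sum_i b i ^+ 2.
  by rewrite mulr_sumr -!big_split /=; apply: eq_bigr => i _; ring.
rewrite -[X in _ <= X]ger0_norm ?addr_ge0 ?sqrtr_ge0 // -sqrtr_sqr.
rewrite ler_wsqrtr // expand sqrrD !sqr_sqrtr ?sumr_sqr_ge0 //; lra.
Qed.
End SquareSums.

Section EuclideanDistance.
Set Implicit Arguments. Unset Strict Implicit.
Context {R : realType} {d : nat}.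
Implicit Types x y z mu : 'rV[R]_d.

Lemma edist_ge0 x y : 0 <= edist x y.
Proof. exact: sqrtr_ge0. Qed.

Lemma edistC x y : edist x y = edist y x.
Proof. by congr Num.sqrt; apply: eq_bigr => j _; rewrite -sqrrN opprB. Qed.

Lemma edist_triangle x y z : edist x z <= edist x y + edist y z.
Proof.
have split_xz : \sum_j (x 0 j - z 0 j) ^+ 2 =
    \sum_j ((x 0 j - y 0 j) + (y 0 j - z 0 j)) ^+ 2.
  by apply: eq_bigr => j _; rewrite addrA subrK.
by rewrite /edist split_xz; exact: sqrt_sumr_sqrD.
Qed.

Lemma edist_cradius S mu x : x \in S -> edist x mu <= cradius S mu.
Proof. by move=> xS; exact: le_bigmax_seq xS isT. Qed.

Lemma cradius_lt S mu t :
  0 < t -> (forall x, x \in S -> edist x mu < t) -> cradius S mu < t.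
Proof. by move=> t_gt0 lt_t; rewrite /cradius big_seq; exact: bigmax_lt. Qed.

Lemma edist_lt_perturbed mu mu' x y r eps gamma :
  0 <= eps -> 1 + 2 * eps <= gamma ->
  edist mu mu' <= r * eps -> edist x mu <= r -> gamma * r < edist y mu ->
  edist x mu' < edist y mu'.
Proof.
move=> eps_ge0 gamma_ge le_mu' le_xr lt_yr.
have r_ge0 : 0 <= r := le_trans (edist_ge0 _ _) le_xr.
have slack : r + r * eps <= gamma * r - r * eps.
  rewrite -subr_ge0 (_ : _ - _ = (gamma - 1 - 2 * eps) * r); last by ring.
  by rewrite mulr_ge0 // subr_ge0 lerBrDr addrC.
have := edist_triangle x mu mu'; have := edist_triangle y mu' mu.
rewrite [edist mu' mu]edistC; lra.
Qed.

End EuclideanDistance.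

Theorem lemma1 (R : realType) (d k : nat) (X : seq 'rV[R]_d)
  (C : 'I_k -> seq 'rV[R]_d) (mu : 'I_k -> 'rV[R]_d) (gamma : R) :
  is_clustering X C ->
  (forall i, mu i = center_of_mass (C i)) ->
  center_based X C mu ->
  gamma_margin X C mu gamma ->
  forall (i : 'I_k) (eps : R) (mu' : 'rV[R]_d),
    0 <= eps ->
    edist (mu i) mu' <= cradius (C i) (mu i) * eps ->
    1 + 2 * eps <= gamma ->
    forall x y, x \in C i -> y \in X -> y \notin C i ->
      edist x mu' < edist y mu'.
Proof.
move=> _ _ _ margin i eps mu' eps_ge0 le_mu' gamma_ge x y xC yX yC.
have gamma_gt0 : 0 < gamma by lra.
have y_far : gamma * cradius (C i) (mu i) < edist y (mu i).
  rewrite mulrC -ltr_pdivlMr //; apply: cradius_lt => [|z zC].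
    rewrite divr_gt0 // (le_lt_trans _ (margin i x y xC yX yC)) //.
    by rewrite mulr_ge0 ?edist_ge0 ?ltW.
  by rewrite ltr_pdivlMr // mulrC; exact: margin.
exact: edist_lt_perturbed eps_ge0 gamma_ge le_mu' (edist_cradius (mu i) xC) y_far.
Qed.
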